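(* Let $\alpha>0$, $\lambda=2\alpha/(\alpha+\sqrt{\alpha^2+4L\alpha})$, $y_0\in\mathrm{dom}\, h$, and run TAA: $s_0=\nabla f(y_0)$, $x_0=\mathrm{argmin}_x\{\langle s_0,x\rangle+h^\alpha(x)\}$, and for $k\ge0$: $\tilde x_{k+1}=(1-\lambda)y_k+\lambda x_k$, $s_{k+1}=(1-\lambda)s_k+\lambda\nabla f(\tilde x_{k+1})$, $x_{k+1}=\mathrm{argmin}_x\{\langle s_{k+1},x\rangle+h^\alpha(x)\}$, $y_{k+1}=(1-\lambda)y_k+\lambda x_{k+1}$. Let $\Gamma_k$ be the ACP model induced by $(y_0,\{\tilde x_{i+1}\}_{i=0}^{k-1},(\lambda,\dots,\lambda))$. Then for all $k\ge0$, $\min_{x\in\mathbb{R}^n}\Gamma_k(x)\ge\phi^\alpha(y_k)-(1-\lambda)^k\Delta$, where $\Delta=\phi^\alpha(y_0)-\Gamma_0(x_0)$.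
   Context: Let $\|\cdot\|$ be a norm on $\mathbb{R}^n$. Let $f:\mathbb{R}^n\to\mathbb{R}$ be convex, differentiable and $L$-smooth ($L>0$) with respect to $\|\cdot\|$, $h:\mathbb{R}^n\to(-\infty,\infty]$ closed proper convex with bounded domain, and $w:\mathbb{R}^n\to[0,+\infty]$ closed, $1$-strongly convex with respect to $\|\cdot\|$ on $\mathrm{dom}\, h$, with $\max_{\mathrm{dom}\, h}w<\infty$. Let $h^\alpha=h+\alpha w$, $\phi^\alpha=f+h^\alpha$, $\ell_f(x;x_0)=f(x_0)+\langle\nabla f(x_0),x-x_0\rangle$. The ACP model induced by $(y_0,\{p_i\}_{i=0}^{k-1},\zeta)$, $\zeta\in[0,1]^k$, is $\Gamma_0(x)=h^\alpha(x)+\ell_f(x;y_0)$, $\Gamma_{j+1}(x)=(1-\zeta_j)\Gamma_j(x)+\zeta_j(h^\alpha(x)+\ell_f(x;p_j))$. *)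

From HB Require Import structures.
From mathcomp Require Import all_boot all_order all_algebra.
From mathcomp Require Import all_classical all_reals all_analysis.
Set Implicit Arguments. Unset Strict Implicit. Unset Printing Implicit Defensive.
Import Order.TTheory GRing.Theory Num.Theory.
Import numFieldNormedType.Exports.
Local Open Scope ring_scope.
Local Open Scope classical_set_scope.

Section Defs.
Context {R : realType} {n : nat}.
Notation vec := 'rV[R]_n.

Definition dotv (s x : vec) : R := \sum_(i < n) s 0 i * x 0 i.

Definition is_norm (N : vec -> R) : Prop :=
  [/\ forall x, 0 <= N x,
      forall x, N x = 0 -> x = 0,
      forall (a : R) x, N (a *: x) = `|a| * N x &
      forall x y, N (x + y) <= N x + N y].

Definition convex_fun (f : vec -> R) : Prop :=
  forall x y (t : R), 0 <= t <= 1 ->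
    f (t *: x + (1 - t) *: y) <= t * f x + (1 - t) * f y.

Definition has_gradient (N : vec -> R) (f : vec -> R) (g : vec -> vec) : Prop :=
  forall x (eps : R), 0 < eps -> exists2 delta : R, 0 < delta &
    forall d, N d < delta -> `|f (x + d) - f x - dotv (g x) d| <= eps * N d.

(* L-smoothness w.r.t. N: ||g x - g y||_* <= L ||x - y||, the dual norm
   ||u||_* = sup_{N v <= 1} <u, v> being unfolded *)
Definition L_smooth (N : vec -> R) (L : R) (g : vec -> vec) : Prop :=
  forall x y v, dotv (g x - g y) v <= L * N (x - y) * N v.

Definition dom (h : vec -> \bar R) : set vec := [set x | (h x < +oo)%E].

Definition closed_fun (h : vec -> \bar R) : Prop :=
  closed [set p : vec * R | (h p.1 <= p.2%:E)%E].

Definition proper_fun (h : vec -> \bar R) : Prop :=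
  (forall x, h x != -oo)%E /\ exists x, (h x < +oo)%E.

Definition convex_efun (h : vec -> \bar R) : Prop :=
  forall x y : vec, forall t : R, 0 < t < 1 ->
    (h (t *: x + (1 - t) *: y)%R <= t%:E * h x + (1 - t)%:E * h y)%E.

Definition bounded_dom (N : vec -> R) (h : vec -> \bar R) : Prop :=
  exists M : R, forall x, dom h x -> N x <= M.

Definition strongly_convex_on (N : vec -> R) (D : set vec) (w : vec -> \bar R) : Prop :=
  forall x y : vec, forall t : R, D x -> D y -> 0 <= t <= 1 ->
    (w (t *: x + (1 - t) *: y)%R <=
       t%:E * w x + (1 - t)%:E * w y - (t * (1 - t) / 2 * N (x - y)%R ^+ 2)%R%:E)%E.

Definition lin (f : vec -> R) (g : vec -> vec) (x0 x : vec) : R :=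
  f x0 + dotv (g x0) (x - x0).

Definition halpha (h w : vec -> \bar R) (alpha : R) (x : vec) : \bar R :=
  (h x + alpha%:E * w x)%E.

Fixpoint ACP (ha : vec -> \bar R) (f : vec -> R) (g : vec -> vec) (y0 : vec)
    (p : nat -> vec) (zeta : nat -> R) (j : nat) (x : vec) : \bar R :=
  match j with
  | 0 => (ha x + (lin f g y0 x)%:E)%E
  | j'.+1 => ((1 - zeta j')%:E * ACP ha f g y0 p zeta j' x
              + (zeta j')%:E * (ha x + (lin f g (p j') x)%:E))%E
  end.

End Defs.

From HB Require Import structures.
From mathcomp Require Import all_boot all_order all_algebra.
From mathcomp Require Import all_classical all_reals all_analysis.
From mathcomp Require Import lra ring.
Import Order.TTheory GRing.Theory Num.Theory.
Import numFieldNormedType.Exports.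
Set Implicit Arguments. Unset Strict Implicit. Unset Printing Implicit Defensive.
Local Open Scope ring_scope.

(* The model Gamma_k is h^alpha plus an affine function of slope s_k (the averaged
   gradient), so the TAA point x_k minimizes Gamma_k and, by alpha-strong convexity of
   h^alpha, Gamma_k >= m_k + alpha/2 ||. - x_k||^2 where m_k = Gamma_k(x_k).  Hence
     m_{k+1} >= (1 - lam) (m_k + alpha/2 ||x_{k+1} - x_k||^2)
                + lam (h^alpha(x_{k+1}) + l_f(x_{k+1}; xt_{k+1})).
   Bounding m_k by induction, f(y_k) below by l_f(y_k; xt_{k+1}), and using convexity
   of h^alpha along y_{k+1} = (1 - lam) y_k + lam x_{k+1}, the right-hand side is at least
     h^alpha(y_{k+1}) + l_f(y_{k+1}; xt_{k+1}) + L/2 ||y_{k+1} - xt_{k+1}||^2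
     - (1 - lam)^{k+1} Delta,
   because y_{k+1} - xt_{k+1} = lam (x_{k+1} - x_k) and L lam^2 = (1 - lam) alpha.
   The descent lemma bounds the first three terms below by phi^alpha(y_{k+1}). *)

Lemma le0_of_forall_le_divSS {R : archiRealFieldType} (X c : R) :
  (forall m : nat, X <= c / m.+2%:R) -> X <= 0.
Proof.
move=> Xle; rewrite leNgt; apply/negP => X0.
set m := Num.Def.truncn (`|c| / X).
have M0 : 0 < m.+2%:R :> R by rewrite ltr0n.
have cM : `|c| < m.+2%:R * X.
  rewrite -ltr_pdivrMr //; apply: lt_trans (truncnS_gt _) _; by rewrite ltr_nat.
have := Xle m; rewrite ler_pdivlMr // => XM.
have := ler_norm c; lra.
Qed.

Lemma le_of_forall_le_addM {R : realFieldType} (X Y K : R) : 0 <= K ->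
  (forall e : R, 0 < e -> X <= Y + e * K) -> X <= Y.
Proof.
move=> K0 XYK; apply/ler_addgt0Pr => e e0.
have K1 : 0 < K + 1 by lra.
have := XYK (e / (K + 1)) (divr_gt0 e0 K1).
have : e / (K + 1) * K <= e by rewrite mulrAC ler_pdivrMr //; lra.
lra.
Qed.

Section Dotv.
Context {R : realType} {n : nat}.
Implicit Types (u v x : 'rV[R]_n) (a : R).

Lemma dotvDl u v x : dotv (u + v) x = dotv u x + dotv v x.
Proof. by rewrite /dotv -big_split; apply: eq_bigr => i _; rewrite !mxE mulrDl. Qed.

Lemma dotvBl u v x : dotv (u - v) x = dotv u x - dotv v x.
Proof. by rewrite /dotv -sumrB; apply: eq_bigr => i _; rewrite !mxE mulrBl. Qed.

Lemma dotvZl a u x : dotv (a *: u) x = a * dotv u x.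
Proof. by rewrite /dotv mulr_sumr; apply: eq_bigr => i _; rewrite !mxE mulrA. Qed.

Lemma dotvDr u v x : dotv x (u + v) = dotv x u + dotv x v.
Proof. by rewrite /dotv -big_split; apply: eq_bigr => i _; rewrite !mxE mulrDr. Qed.

Lemma dotvBr u v x : dotv x (u - v) = dotv x u - dotv x v.
Proof. by rewrite /dotv -sumrB; apply: eq_bigr => i _; rewrite !mxE mulrBr. Qed.

Lemma dotvZr a u x : dotv x (a *: u) = a * dotv x u.
Proof. by rewrite /dotv mulr_sumr; apply: eq_bigr => i _; rewrite !mxE mulrCA. Qed.

End Dotv.

Section Smooth.
Context {R : realType} {n : nat}.
Variables (N : 'rV[R]_n -> R) (f : 'rV[R]_n -> R) (g : 'rV[R]_n -> 'rV[R]_n).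
Hypotheses (Nnorm : is_norm N) (fcvx : convex_fun f) (fgrad : has_gradient N f g).

Lemma is_norm_ge0 x : 0 <= N x.
Proof. by case: Nnorm. Qed.

Lemma is_normZ_ge0 t x : 0 <= t -> N (t *: x) = t * N x.
Proof. by case: Nnorm => _ _ NZ _ t0; rewrite NZ ger0_norm. Qed.

Lemma lin_le_fun a b : lin f g b a <= f a.
Proof.
set d := a - b; have Nd0 := is_norm_ge0 d.
apply: (le_of_forall_le_addM Nd0) => e e0.
have [del del0 Hdel] := fgrad b e0.
set t := del / (del + N d).
have D0 : 0 < del + N d by lra.
have t0 : 0 < t by apply: divr_gt0.
have t1 : t <= 1 by rewrite /t ler_pdivrMr //; lra.
have Ntd : N (t *: d) < del.
  rewrite (is_normZ_ge0 _ (ltW t0)) /t mulrAC ltr_pdivrMr //.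
  have := mulr_gt0 del0 del0; lra.
have /ler_normlP[ftd _] := Hdel _ Ntd.
rewrite dotvZr (is_normZ_ge0 _ (ltW t0)) in ftd.
have := fcvx a b (introT andP (conj (ltW t0) t1)).
have -> : t *: a + (1 - t) *: b = b + t *: d.
  by rewrite /d scalerBr scalerBl scale1r addrCA.
move=> fcomb.
have : t * (lin f g b a - (f a + e * N d)) <= 0.
  by rewrite /lin -/d; lra.
by rewrite pmulr_rle0 //; lra.
Qed.

Variable L : R.
Hypothesis gsmooth : L_smooth N L g.

Lemma smooth_step a u v :
  f v <= f u + dotv (g a) (v - u) + L * N (v - a) * N (v - u).
Proof.
have := lin_le_fun u v; have := gsmooth v a (v - u).
rewrite /lin dotvBl !dotvBr; lra.
Qed.

Lemma descent_lemma a b : f b <= lin f g a b + L / 2 * N (b - a) ^+ 2.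
Proof.
set d := b - a; set G := dotv (g a) d; set K := N d.
suff : f b - lin f g a b - L / 2 * K ^+ 2 <= 0 by lra.
(* Telescope [smooth_step] over [M] equal steps from [a] to [b]; the error
   [L K^2 / (2 M)] beyond the bound vanishes as [M] grows. *)
have walk M (j : nat) : 0 < M -> f (a + (j%:R / M) *: d) <=
    f a + j%:R / M * G + L / 2 * K ^+ 2 * (j%:R * (j%:R + 1)) / M ^+ 2.
  move=> M0; elim: j => [|j IH]; first by rewrite mulr0n !mul0r scale0r addr0 mulr0 mul0r; lra.
  have stepE : a + (j.+1%:R / M) *: d - (a + (j%:R / M) *: d) = M^-1 *: d.
    rewrite opprD addrACA subrr add0r -scalerBl; congr (_ *: _).
    by rewrite -natr1 mulrDl mul1r addrAC subrr add0r.
  have walkE : a + (j.+1%:R / M) *: d - a = (j.+1%:R / M) *: d.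
    by rewrite addrAC subrr add0r.
  have u0 : 0 <= M^-1 by rewrite invr_ge0 ltW.
  have c0 : 0 <= j.+1%:R / M by rewrite divr_ge0 // ltW.
  have := smooth_step a (a + (j%:R / M) *: d) (a + (j.+1%:R / M) *: d).
  rewrite stepE walkE dotvZr (is_normZ_ge0 _ u0) (is_normZ_ge0 _ c0) -/G -/K -[j.+1%:R]natr1.
  have -> : L * ((j%:R + 1) / M * K) * (M^-1 * K) = L * K ^+ 2 * (j%:R + 1) / M ^+ 2.
    by field; rewrite gt_eqF.
  have -> : L / 2 * K ^+ 2 * ((j%:R + 1) * (j%:R + 1 + 1)) / M ^+ 2
      = L / 2 * K ^+ 2 * (j%:R * (j%:R + 1)) / M ^+ 2 + L * K ^+ 2 * (j%:R + 1) / M ^+ 2.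
    by field; rewrite gt_eqF.
  rewrite mulrDl; lra.
apply: (@le0_of_forall_le_divSS _ _ (L / 2 * K ^+ 2)) => m.
have M0 : 0 < m.+2%:R :> R by rewrite ltr0n.
have := walk _ m.+2 M0; rewrite divff ?gt_eqF // scale1r mul1r /d addrC subrK.
have -> : L / 2 * K ^+ 2 * (m.+2%:R * (m.+2%:R + 1)) / m.+2%:R ^+ 2
    = L / 2 * K ^+ 2 + L / 2 * K ^+ 2 / m.+2%:R.
  by field; rewrite gt_eqF.
rewrite /lin -/d -/G; move: (L / 2 * K ^+ 2 / m.+2%:R) => r; lra.
Qed.

End Smooth.

Section Affine.
Context {R : realType} {n : nat}.

Definition affine_fun (l : 'rV[R]_n -> R) : Prop :=
  forall z1 z2 (t : R), l (t *: z1 + (1 - t) *: z2) = t * l z1 + (1 - t) * l z2.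

Lemma lin_affine (f : 'rV[R]_n -> R) (g : 'rV[R]_n -> 'rV[R]_n) x0 :
  affine_fun (lin f g x0).
Proof.
move=> z1 z2 t; rewrite /lin.
have -> : t *: z1 + (1 - t) *: z2 - x0 = t *: (z1 - x0) + (1 - t) *: (z2 - x0).
  by rewrite !scalerBr addrACA -opprD -scalerDl [t + _]addrC subrK scale1r.
by rewrite (dotvDr (t *: (z1 - x0))) !dotvZr; ring.
Qed.

End Affine.

Section ACPModel.
Context {R : realType} {n : nat}.
Variables (f : 'rV[R]_n -> R) (g : 'rV[R]_n -> 'rV[R]_n) (y0 : 'rV[R]_n).
Variables (p : nat -> 'rV[R]_n) (zeta : nat -> R).

Fixpoint acp_lin (k : nat) (z : 'rV[R]_n) : R :=
  match k with
  | 0 => lin f g y0 z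
  | k'.+1 => (1 - zeta k') * acp_lin k' z + zeta k' * lin f g (p k') z
  end.

Lemma acp_lin_affine k : affine_fun (acp_lin k).
Proof.
move=> z1 z2 t; elim: k => [|k IH] /=; first exact: lin_affine.
by rewrite IH lin_affine; ring.
Qed.

Lemma ACP_split (ha : 'rV[R]_n -> \bar R) k z :
  (forall j, 0 <= zeta j <= 1) -> ha z != -oo%E ->
  ACP ha f g y0 p zeta k z = (ha z + (acp_lin k z)%:E)%E.
Proof.
move=> zeta01; elim: k => [//|k IH] haz /=; rewrite IH //.
case: (ha z) haz => [r _| _ |//] /=; first by congr EFin; ring.
have /andP[z0 z1] := zeta01 k.
rewrite !addye //.
have [->|znz] := eqVneq (zeta k) 0; first by rewrite subr0 mul1e mul0e adde0.
have zpos : (0 < (zeta k)%:E)%E by rewrite lte_fin lt_def znz z0.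
have ooM_ge0 : (0 <= (1 - zeta k)%:E * +oo)%E by rewrite mule_ge0 // lee_fin subr_ge0.
by rewrite (gt0_muley zpos) addey // gt_eqF // (lt_le_trans ltNy0 ooM_ge0).
Qed.

Variable s : nat -> 'rV[R]_n.
Hypotheses (s0 : s 0 = g y0)
  (sS : forall k, s k.+1 = (1 - zeta k) *: s k + zeta k *: g (p k)).

Lemma acp_linE k z v : acp_lin k z = acp_lin k v + dotv (s k) (z - v).
Proof.
elim: k => [|k IH] /=; first by rewrite /lin s0 !dotvBr; ring.
by rewrite IH sS /lin !dotvBr !dotvDl !dotvZl; ring.
Qed.

End ACPModel.

Section StrongConvexity.
Context {R : realType} {n : nat}.
Variables (N : 'rV[R]_n -> R) (alpha : R) (D : set 'rV[R]_n).

Definition rstrongly_convex_on (F : 'rV[R]_n -> R) : Prop :=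
  forall z1 z2 (t : R), D z1 -> D z2 -> 0 < t < 1 ->
    D (t *: z1 + (1 - t) *: z2) /\
    F (t *: z1 + (1 - t) *: z2) <=
      t * F z1 + (1 - t) * F z2 - alpha * (t * (1 - t) / 2 * N (z1 - z2) ^+ 2).

Lemma rstrongly_convex_onD_affine F l :
  rstrongly_convex_on F -> affine_fun l -> rstrongly_convex_on (F \+ l).
Proof.
move=> Fsc laff z1 z2 t D1 D2 t01; have [Dc Fc] := Fsc z1 z2 t D1 D2 t01.
by split => //=; rewrite laff; lra.
Qed.

Lemma rstrongly_convex_min_growth F x z :
  rstrongly_convex_on F -> D x -> (forall v, D v -> F x <= F v) -> D z ->
  F x + alpha / 2 * N (z - x) ^+ 2 <= F z.
Proof.
move=> Fsc Dx xmin Dz; set Q := N (z - x) ^+ 2.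
suff : F x + alpha / 2 * Q - F z <= 0 by lra.
apply: (@le0_of_forall_le_divSS _ _ (alpha / 2 * Q)) => m.
have M1 : 1 < m.+2%:R :> R by rewrite ltr1n.
move: m.+2%:R M1 => M M1; set t := M^-1.
have t0 : 0 < t by rewrite invr_gt0; lra.
have t1 : t < 1 by rewrite invf_lt1 //; lra.
have [Dv Fv] := Fsc z x t Dz Dx (introT andP (conj t0 t1)).
have Fxv := xmin _ Dv.
have : t * (F x + alpha / 2 * Q - F z - alpha / 2 * Q * t) <= 0.
  by move: Fv Fxv; rewrite -/Q; lra.
by rewrite pmulr_rle0 //; lra.
Qed.

End StrongConvexity.

Section StepSize.
Context {R : rcfType}.
Variables (L alpha : R).
Hypotheses (L0 : 0 < L) (alpha0 : 0 < alpha).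

(* The positive root of [L x^2 + alpha x - alpha = 0], in a form free of cancellation. *)
Definition taa_step : R := 2 * alpha / (alpha + Num.sqrt (alpha ^+ 2 + 4 * L * alpha)).

Let S : R := Num.sqrt (alpha ^+ 2 + 4 * L * alpha).

Let S2 : S ^+ 2 = alpha ^+ 2 + 4 * L * alpha.
Proof. by rewrite sqr_sqrtr //; have := mulr_gt0 L0 alpha0; nra. Qed.

Let alpha_lt_S : alpha < S.
Proof.
have := S2; have := mulr_gt0 L0 alpha0.
have : 0 <= S by exact: sqrtr_ge0.
nra.
Qed.

Lemma taa_step_gt0 : 0 < taa_step.
Proof. by rewrite /taa_step -/S; apply: divr_gt0; move: alpha0 alpha_lt_S; lra. Qed.

Lemma taa_step_lt1 : taa_step < 1.
Proof. by rewrite ltr_pdivrMr -/S; move: alpha0 alpha_lt_S; lra. Qed.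

Lemma taa_step_root : L * taa_step ^+ 2 = (1 - taa_step) * alpha.
Proof.
have Lnz : L != 0 by rewrite gt_eqF.
have stepE : taa_step = (S - alpha) / (2 * L).
  have aS0 : alpha + S != 0 by rewrite gt_eqF //; move: alpha0 alpha_lt_S; lra.
  apply/eqP; rewrite /taa_step -/S eqr_div ?mulf_neq0 //.
  by apply/eqP; move: S2; nra.
apply/eqP; rewrite -subr_eq0 stepE.
have -> : L * ((S - alpha) / (2 * L)) ^+ 2 - (1 - (S - alpha) / (2 * L)) * alpha
    = (S ^+ 2 - (alpha ^+ 2 + 4 * L * alpha)) / (4 * L) by field.
by rewrite S2 subrr mul0r.
Qed.

End StepSize.

Lemma fineK_lty {R : numDomainType} {u : \bar R} :
  u != -oo%E -> (u < +oo)%E -> (fine u)%:E = u.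
Proof. by move=> uNy uy; rewrite fineK // fin_numE uNy lt_eqF. Qed.

Section HAlpha.
Context {R : realType} {n : nat}.
Variables (N : 'rV[R]_n -> R) (h w : 'rV[R]_n -> \bar R) (alpha : R).
Hypotheses (hNy : forall z, h z != -oo%E) (w_ge0 : forall z, (0 <= w z)%E).
Hypotheses (dom_hw : (dom h `<=` dom w)%classic) (alpha0 : 0 <= alpha).

Let wNy z : w z != -oo%E.
Proof. by rewrite gt_eqF // (lt_le_trans ltNy0 (w_ge0 z)). Qed.

Lemma halphaE z : dom h z -> halpha h w alpha z = (fine (h z) + alpha * fine (w z))%:E.
Proof.
by move=> Dz; rewrite /halpha -(fineK_lty (hNy z) Dz) -(fineK_lty (wNy z) (dom_hw Dz)).
Qed.

Lemma halpha_out z : ~ dom h z -> halpha h w alpha z = +oo%E.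
Proof.
move=> nDz; have /eqP hz : h z == +oo%E by rewrite -leye_eq leNgt; apply/negP.
by rewrite /halpha hz addye // gt_eqF // (lt_le_trans ltNy0) // mule_ge0.
Qed.

Lemma halphaNy z : halpha h w alpha z != -oo%E.
Proof. by case: (pselect (dom h z)) => [/halphaE | /halpha_out] ->. Qed.

Lemma halpha_argmin_dom (s x z : 'rV[R]_n) :
  ((dotv s x)%:E + halpha h w alpha x <= (dotv s z)%:E + halpha h w alpha z)%E ->
  dom h z -> dom h x.
Proof.
move=> xmin Dz; case: (pselect (dom h x)) => // nDx.
by move: xmin; rewrite (halpha_out nDx) (halphaE Dz) addey // -EFinD leye_eq.
Qed.

Lemma halpha_rstrongly_convex :
  convex_efun h -> strongly_convex_on N (dom h) w ->
  rstrongly_convex_on N alpha (dom h) (fine \o halpha h w alpha).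
Proof.
move=> hcvx wsc z1 z2 t D1 D2 t01; have hc := hcvx z1 z2 t t01.
set c := t *: z1 + (1 - t) *: z2 in hc *.
rewrite -(fineK_lty (hNy z1) D1) -(fineK_lty (hNy z2) D2) -!EFinM -EFinD in hc.
have Dc : dom h c := le_lt_trans hc (ltry _).
rewrite -(fineK_lty (hNy c) Dc) lee_fin in hc.
have /andP[t0 t1] := t01.
have := wsc z1 z2 t D1 D2 (introT andP (conj (ltW t0) (ltW t1))); rewrite -/c.
rewrite -(fineK_lty (wNy z1) (dom_hw D1)) -(fineK_lty (wNy z2) (dom_hw D2)).
rewrite -(fineK_lty (wNy c) (dom_hw Dc)) -!EFinM -EFinD lee_fin => wc.
split => //=; rewrite !halphaE //=.
by have := ler_wpM2l alpha0 wc; lra.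
Qed.

End HAlpha.

Section TAA.
Context {R : realType} {n : nat}.
Variables (N : 'rV[R]_n -> R) (f : 'rV[R]_n -> R) (g : 'rV[R]_n -> 'rV[R]_n).
Variables (L alpha lam : R) (D : set 'rV[R]_n) (Ha : 'rV[R]_n -> R).
Variables (y x xt s : nat -> 'rV[R]_n).
Hypotheses (Nnorm : is_norm N) (fcvx : convex_fun f) (fgrad : has_gradient N f g).
Hypothesis gsmooth : L_smooth N L g.
Hypotheses (Hasc : rstrongly_convex_on N alpha D Ha) (alpha0 : 0 <= alpha).
Hypotheses (lam01 : 0 < lam < 1) (lam_root : L * lam ^+ 2 = (1 - lam) * alpha).
Hypotheses (Dy0 : D (y 0)) (Dx : forall k, D (x k)).
Hypotheses (s0 : s 0 = g (y 0))
  (xtE : forall k, xt k.+1 = (1 - lam) *: y k + lam *: x k)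
  (sE : forall k, s k.+1 = (1 - lam) *: s k + lam *: g (xt k.+1))
  (yE : forall k, y k.+1 = (1 - lam) *: y k + lam *: x k.+1).
Hypothesis xmin : forall k v, D v -> dotv (s k) (x k) + Ha (x k) <= dotv (s k) v + Ha v.

Let ell := acp_lin f g (y 0) (fun i => xt i.+1) (fun _ => lam).

Let onemK : 1 - (1 - lam) = lam.
Proof. by ring. Qed.

Lemma taa_model_argmin k v : D v -> Ha (x k) + ell k (x k) <= Ha v + ell k v.
Proof.
move=> Dv; rewrite /ell (acp_linE f s0 sE k v (x k)) dotvBr.
by have := xmin k Dv; lra.
Qed.

Lemma taa_y_step k : D (y k) ->
  D (y k.+1) /\ Ha (y k.+1) <= (1 - lam) * Ha (y k) + lam * Ha (x k.+1).
Proof.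
have /andP[lam0 lam1] := lam01.
move=> Dyk; have lam01' : 0 < 1 - lam < 1 by apply/andP; split; lra.
have [] := Hasc Dyk (Dx k.+1) lam01'.
rewrite onemK -yE => Dy Hay; split => //.
have : 0 <= alpha * ((1 - lam) * lam / 2 * N (y k - x k.+1) ^+ 2).
  by rewrite mulr_ge0 // mulr_ge0 ?sqr_ge0 // divr_ge0 // mulr_ge0 //; lra.
lra.
Qed.

Lemma taa_y_in_dom k : D (y k).
Proof. by elim: k => [//|k IH]; case: (taa_y_step IH). Qed.

Let Delta0 := f (y 0) + Ha (y 0) - (Ha (x 0) + ell 0 (x 0)).

Lemma taa_model_min_bound k :
  f (y k) + Ha (y k) - (1 - lam) ^+ k * Delta0 <= Ha (x k) + ell k (x k).
Proof.
have /andP[lam0 lam1] := lam01; have lam1' : 0 <= 1 - lam by lra.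
elim: k => [|k IH]; first by rewrite expr0 mul1r /Delta0; lra.
set Q := N (x k.+1 - x k) ^+ 2.
have growth : Ha (x k) + ell k (x k) + alpha / 2 * Q <= Ha (x k.+1) + ell k (x k.+1).
  have Gsc : rstrongly_convex_on N alpha D (Ha \+ ell k).
    exact: rstrongly_convex_onD_affine Hasc (acp_lin_affine _ _ _ _ _ k).
  exact: rstrongly_convex_min_growth Gsc (Dx k) (@taa_model_argmin k) (Dx k.+1).
have lower : lin f g (xt k.+1) (y k) <= f (y k) := lin_le_fun Nnorm fcvx fgrad _ _.
have upper : f (y k.+1) <= lin f g (xt k.+1) (y k.+1) + (1 - lam) * (alpha / 2 * Q).
  have dy : y k.+1 - xt k.+1 = lam *: (x k.+1 - x k).
    by rewrite yE xtE opprD addrACA subrr add0r -scalerBr.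
  have := descent_lemma Nnorm fcvx fgrad gsmooth (xt k.+1) (y k.+1).
  rewrite dy (is_normZ_ge0 Nnorm _ (ltW lam0)) exprMn.
  suff -> : L / 2 * (lam ^+ 2 * Q) = (1 - lam) * (alpha / 2 * Q) by [].
  by rewrite !mulrA -lam_root; ring.
have lin_comb : lin f g (xt k.+1) (y k.+1)
    = (1 - lam) * lin f g (xt k.+1) (y k) + lam * lin f g (xt k.+1) (x k.+1).
  by rewrite yE -[X in X *: x k.+1]onemK lin_affine onemK.
have [_ Ha_comb] := taa_y_step (taa_y_in_dom k).
have := ler_wpM2l lam1' (le_trans (lerD IH (lexx (alpha / 2 * Q))) growth).
have := ler_wpM2l lam1' lower.
rewrite /= exprS; lra.
Qed.

Lemma taa_model_lower_bound k v : D v ->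
  f (y k) + Ha (y k) - (1 - lam) ^+ k * Delta0 <= Ha v + ell k v.
Proof. by move=> Dv; apply: le_trans (taa_model_min_bound k) (taa_model_argmin k Dv). Qed.

End TAA.

Unset Implicit Arguments.

Theorem propositionD1 (R : realType) (n : nat) (N : 'rV[R]_n -> R)
  (f : 'rV[R]_n -> R) (gf : 'rV[R]_n -> 'rV[R]_n) (L : R)
  (h w : 'rV[R]_n -> \bar R) (alpha : R)
  (y x xt s : nat -> 'rV[R]_n) :
  is_norm N ->
  convex_fun f -> has_gradient N f gf -> 0 < L -> L_smooth N L gf ->
  closed_fun h -> proper_fun h -> convex_efun h -> bounded_dom N h ->
  closed_fun w -> (forall z, (0 <= w z)%E) -> strongly_convex_on N (dom h) w ->
  (exists C : R, forall z, dom h z -> (w z <= C%:E)%E) ->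
  0 < alpha ->
  let lam := 2 * alpha / (alpha + Num.sqrt (alpha ^+ 2 + 4 * L * alpha)) in
  let ha := halpha h w alpha in
  dom h (y 0%N) ->
  s 0%N = gf (y 0%N) ->
  (forall k z, ((dotv (s k) (x k))%:E + ha (x k) <= (dotv (s k) z)%:E + ha z)%E) ->
  (forall k, xt k.+1 = (1 - lam) *: y k + lam *: x k) ->
  (forall k, s k.+1 = (1 - lam) *: s k + lam *: gf (xt k.+1)) ->
  (forall k, y k.+1 = (1 - lam) *: y k + lam *: x k.+1) ->
  let Gamma := ACP ha f gf (y 0%N) (fun i => xt i.+1) (fun _ => lam) in
  let phi := fun z => ((f z)%:E + ha z)%E in
  let Delta := (phi (y 0%N) - Gamma 0%N (x 0%N))%E in
  forall (k : nat) (z : 'rV[R]_n),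
    (phi (y k) - ((1 - lam) ^+ k)%:E * Delta <= Gamma k z)%E.
Proof.
(* Closedness and boundedness only serve the existence of the minimizers [x k],
   which is assumed here. *)
move=> Nnorm fcvx fgrad L0 gsmooth _ [hNy _] hcvx _ _ w_ge0 wsc [C wC] alpha0.
move=> lam ha Dy0 s0 xmin xtE sE yE Gamma phi Delta k z.
have alpha_ge0 : 0 <= alpha := ltW alpha0.
have dom_hw : (dom h `<=` dom w)%classic := fun v Dv => le_lt_trans (wC v Dv) (ltry C).
have lam01 : 0 < lam < 1 by rewrite taa_step_gt0 ?taa_step_lt1.
have haE v : dom h v -> ha v = (fine (ha v))%:E by move=> Dv; rewrite /ha halphaE.
have Dx j : dom h (x j) := halpha_argmin_dom hNy w_ge0 dom_hw alpha_ge0 (xmin j (y 0%N)) Dy0.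
have xminR j v : dom h v ->
    dotv (s j) (x j) + fine (ha (x j)) <= dotv (s j) v + fine (ha v).
  by move=> Dv; have := xmin j v; rewrite (haE _ (Dx j)) (haE _ Dv).
have Hasc := halpha_rstrongly_convex hNy w_ge0 dom_hw alpha_ge0 hcvx wsc.
have lam_root : L * lam ^+ 2 = (1 - lam) * alpha := taa_step_root L0 alpha0.
have zeta01 j : 0 <= (fun _ : nat => lam) j <= 1 by case/andP: lam01 => /ltW -> /ltW ->.
have haNy v : ha v != -oo%E := halphaNy hNy w_ge0 dom_hw alpha_ge0 v.
rewrite /Delta /phi /Gamma !(ACP_split _ _ _ _ _ zeta01 (haNy _)).
case: (pselect (dom h z)) => [Dz|nDz]; last by rewrite [ha z]halpha_out // addye // leey.
have Dyk := taa_y_in_dom Hasc alpha_ge0 lam01 Dy0 Dx yE k.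
rewrite (haE _ Dz) (haE _ Dy0) (haE _ (Dx 0%N)) (haE _ Dyk) -!EFinD lee_fin.
exact: taa_model_lower_bound Nnorm fcvx fgrad gsmooth Hasc alpha_ge0 lam01 lam_root
  Dy0 Dx s0 xtE sE yE xminR k _ Dz.
Qed.
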